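(* For every tree $\Gamma$ as described, there exist coefficients $\lambda_x>0$ and $\beta_x\in\mathbb R$ ($x\in\Gamma$) such that the associated Jacobi matrix $J$ with domain $\mathcal F(\Gamma)$ is not essentially selfadjoint in $\ell^2(\Gamma)$.
   Context: Let $\Gamma$ be an infinite connected tree whose vertices are arranged in levels $\ell(x)\in\{0,1,2,\dots\}$: every vertex $x$ is adjacent to exactly one vertex $x'$ with $\ell(x')=\ell(x)+1$; for $\ell(x)\ge 1$ the set $N_x=\{y:\ y'=x\}$ of neighbours of $x$ on level $\ell(x)-1$ is finite and nonempty; $N_x=\emptyset$ if $\ell(x)=0$; there are no other edges. Given $\lambda_x>0$, $\beta_x\in\mathbb R$, the Jacobi matrix $J$ acts on functions $v:\Gamma\to\mathbb C$ by $(Jv)(x)=\lambda_x v(x')+\beta_x v(x)+\sum_{y\in N_x}\lambda_y v(y)$. $\mathcal F(\Gamma)$ denotes the finitely supported functions; $J$ with domain $\mathcal F(\Gamma)$ is symmetric in $\ell^2(\Gamma)$. *)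

From Stdlib Require Import Reals List.
Open Scope R_scope.

Record Cx := mkC { re : R; im : R }.
Definition C0 : Cx := mkC 0 0.
Definition Cadd (z w : Cx) : Cx := mkC (re z + re w) (im z + im w).
Definition Csub (z w : Cx) : Cx := mkC (re z - re w) (im z - im w).
Definition Cmul (z w : Cx) : Cx :=
  mkC (re z * re w - im z * im w) (re z * im w + im z * re w).
Definition Cconj (z : Cx) : Cx := mkC (re z) (- im z).
Definition Cscale (r : R) (z : Cx) : Cx := mkC (r * re z) (r * im z).
Definition Cnorm2 (z : Cx) : R := re z * re z + im z * im z.

Definition Csum {V : Type} (l : list V) (f : V -> Cx) : Cx :=
  fold_right (fun x acc => Cadd (f x) acc) C0 l.
Definition Rsum {V : Type} (l : list V) (f : V -> R) : R :=
  fold_right (fun x acc => f x + acc) 0 l.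

(** * Level trees
   Vertices V, level map [lvl], the unique upper neighbour [par x] = x',
   and [ch x] an enumeration (without repetition) of N_x = {y : y' = x}. *)
Definition is_level_tree (V : Type) (lvl : V -> nat) (par : V -> V)
  (ch : V -> list V) : Prop :=
  inhabited V /\
  (forall x, lvl (par x) = S (lvl x)) /\
  (forall x y, par y = x <-> In y (ch x)) /\
  (forall x, NoDup (ch x)) /\
  (forall x, (1 <= lvl x)%nat -> ch x <> nil) /\
  (forall x, lvl x = 0%nat -> ch x = nil) /\
  (* connectedness: any two vertices have a common ancestor *)
  (forall x y, exists m n, Nat.iter m par x = Nat.iter n par y).

Definition Japply {V : Type} (par : V -> V) (ch : V -> list V)
  (lam beta : V -> R) (v : V -> Cx) (x : V) : Cx :=
  Cadd (Cadd (Cscale (lam x) (v (par x))) (Cscale (beta x) (v x)))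
       (Csum (ch x) (fun y => Cscale (lam y) (v y))).

Definition fsupp {V : Type} (v : V -> Cx) : Prop :=
  exists l : list V, forall x, ~ In x l -> v x = C0.

(** sum_{x in V} |v x|^2 <= M  (supremum over finite sets of vertices) *)
Definition sumsq_le {V : Type} (v : V -> Cx) (M : R) : Prop :=
  forall l : list V, NoDup l -> Rsum l (fun x => Cnorm2 (v x)) <= M.

Definition in_l2 {V : Type} (v : V -> Cx) : Prop := exists M, sumsq_le v M.

Definition l2_conv {V : Type} (f : nat -> V -> Cx) (u : V -> Cx) : Prop :=
  forall eps, 0 < eps -> exists N, forall n, (N <= n)%nat ->
    sumsq_le (fun x => Csub (f n x) (u x)) eps.

(** <u, v> = sum_x conj(u x) v x = c  (unconditional sum, as a net limit over
    finite sets of vertices) *)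
Definition inner_is {V : Type} (u v : V -> Cx) (c : Cx) : Prop :=
  forall eps, 0 < eps -> exists l0 : list V, forall l, NoDup l -> incl l0 l ->
    Cnorm2 (Csub (Csum l (fun x => Cmul (Cconj (u x)) (v x))) c) < eps.

(** * Operators in l^2(V), represented by their graphs *)
Definition graph (V : Type) := (V -> Cx) -> (V -> Cx) -> Prop.

Definition Jmin {V : Type} (par : V -> V) (ch : V -> list V)
  (lam beta : V -> R) : graph V :=
  fun u w => fsupp u /\ forall x, w x = Japply par ch lam beta u x.

Definition closure {V : Type} (G : graph V) : graph V :=
  fun u w => in_l2 u /\ in_l2 w /\
    exists (f g : nat -> V -> Cx),
      (forall n, G (f n) (g n)) /\ l2_conv f u /\ l2_conv g w.

Definition adjoint {V : Type} (G : graph V) : graph V :=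
  fun u w => in_l2 u /\ in_l2 w /\
    forall f g, G f g -> exists c, inner_is w f c /\ inner_is u g c.

Definition selfadjoint {V : Type} (G : graph V) : Prop :=
  forall u w, G u w <-> adjoint G u w.

Definition ess_selfadjoint {V : Type} (G : graph V) : Prop :=
  selfadjoint (closure G).

(* Fix a vertex x0 on level 0 and the ray x0, x0', x0'', ... .  With weights 4^n along
   the ray and beta = 0, the function u equal to (i/2)^n on the n-th ray vertex and 0
   elsewhere is square summable and satisfies (J u)(x) = 0 at every ray vertex but x0;
   the weights 1/|N_x'| off the ray keep J u square summable as well.  Green's formula
   against finitely supported functions, passed to the limit, puts (u, J u) in the
   adjoint of the closure of J.  If the closure were selfadjoint, <u, J u> would equal
   <J u, u>, yet <u, J u> = conj(u(x0)) (J u)(x0) = i/2 is not real. *)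

From Stdlib Require Import Reals List Permutation ClassicalEpsilon Lia Lra.
Open Scope R_scope.

Section FiniteSums.

Context {V : Type}.
Implicit Types (l K : list V) (f g h : V -> R).

Lemma Rsum_cons x l f : Rsum (x :: l) f = f x + Rsum l f.
Proof. reflexivity. Qed.

Lemma Rsum_app l1 l2 f : Rsum (l1 ++ l2) f = Rsum l1 f + Rsum l2 f.
Proof. induction l1 as [|x l1 IH]; simpl; [lra|]. unfold Rsum in *; rewrite IH; lra. Qed.

Lemma Rsum_perm l1 l2 f : Permutation l1 l2 -> Rsum l1 f = Rsum l2 f.
Proof. induction 1; unfold Rsum in *; simpl in *; lra. Qed.

Lemma Rsum_ext_in l f g : (forall x, In x l -> f x = g x) -> Rsum l f = Rsum l g.
Proof.
  induction l as [|x l IH]; intros H; simpl; [reflexivity|].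
  unfold Rsum in *; simpl; rewrite H, IH; try reflexivity; try now left.
  intros y Hy; apply H; now right.
Qed.

Lemma Rsum_eq0 l f : (forall x, In x l -> f x = 0) -> Rsum l f = 0.
Proof.
  induction l as [|x l IH]; intros H; simpl; [reflexivity|].
  unfold Rsum in *; simpl; rewrite H, IH; try lra; try now left.
  intros y Hy; apply H; now right.
Qed.

Lemma Rsum_add l f g : Rsum l (fun x => f x + g x) = Rsum l f + Rsum l g.
Proof. induction l; unfold Rsum in *; simpl; [lra|]. rewrite IHl. lra. Qed.

Lemma Rsum_sub l f g : Rsum l (fun x => f x - g x) = Rsum l f - Rsum l g.
Proof. induction l; unfold Rsum in *; simpl; [lra|]. rewrite IHl. lra. Qed.

Lemma Rsum_scal l c f : Rsum l (fun x => c * f x) = c * Rsum l f.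
Proof. induction l; unfold Rsum in *; simpl; [lra|]. rewrite IHl. lra. Qed.

Lemma Rsum_const l c : Rsum l (fun _ => c) = INR (length l) * c.
Proof.
  induction l as [|x l IH]; [unfold Rsum; simpl; lra|].
  change (length (x :: l)) with (S (length l)). rewrite S_INR.
  unfold Rsum in *; simpl; rewrite IH; lra.
Qed.

Lemma Rsum_le l f g : (forall x, In x l -> f x <= g x) -> Rsum l f <= Rsum l g.
Proof.
  induction l as [|x l IH]; intros H; simpl; [lra|].
  unfold Rsum in *; simpl.
  pose proof (H x (or_introl eq_refl)).
  pose proof (IH (fun y Hy => H y (or_intror Hy))). lra.
Qed.

Lemma Rsum_nonneg l f : (forall x, 0 <= f x) -> 0 <= Rsum l f.
Proof. intros H. rewrite <- (Rsum_eq0 l (fun _ => 0)) by auto. apply Rsum_le; auto. Qed.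

Lemma Rabs_Rsum_le l f : Rabs (Rsum l f) <= Rsum l (fun x => Rabs (f x)).
Proof.
  induction l; unfold Rsum in *; simpl; [rewrite Rabs_R0; lra|].
  eapply Rle_trans; [apply Rabs_triang|]. lra.
Qed.

Lemma Rsum_single l z f : NoDup l -> In z l ->
  (forall x, In x l -> x <> z -> f x = 0) -> Rsum l f = f z.
Proof.
  induction l as [|x l IH]; intros Hl Hz Hf; [destruct Hz|].
  inversion Hl as [|? ? Hx Hl']; subst. rewrite Rsum_cons.
  destruct Hz as [<-|Hz].
  - rewrite (Rsum_eq0 l); [lra|].
    intros y Hy; apply Hf; [now right|]. intros ->; contradiction.
  - rewrite (Hf x), IH; auto; [lra| |now left|].
    + intros y Hy; apply Hf; now right.
    + intros ->; contradiction.
Qed.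

Lemma Rsum_filter_nonzero l f :
  Rsum (filter (fun x => if Req_EM_T (f x) 0 then false else true) l) f = Rsum l f.
Proof.
  induction l as [|x l IH]; simpl; [reflexivity|].
  destruct (Req_EM_T (f x) 0) as [E|E]; unfold Rsum in *; simpl; rewrite IH; lra.
Qed.

Lemma Rsum_NoDup_support l1 l2 f : NoDup l1 -> NoDup l2 ->
  (forall x, f x <> 0 -> (In x l1 <-> In x l2)) -> Rsum l1 f = Rsum l2 f.
Proof.
  intros H1 H2 H12. rewrite <- (Rsum_filter_nonzero l1), <- (Rsum_filter_nonzero l2).
  apply Rsum_perm, NoDup_Permutation; try apply NoDup_filter; auto.
  intros x. rewrite !filter_In.
  destruct (Req_EM_T (f x) 0) as [E|E]; [intuition discriminate|].
  specialize (H12 x E). intuition.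
Qed.

Lemma Rsum_le_incl l K h : NoDup l -> (forall x, 0 <= h x) ->
  (forall x, In x l -> h x <> 0 -> In x K) -> Rsum l h <= Rsum K h.
Proof.
  revert K. induction l as [|x l IH]; intros K Hl Hh Hs.
  - apply Rsum_nonneg; auto.
  - inversion Hl as [|? ? Hx Hl']; subst. rewrite Rsum_cons.
    destruct (Req_dec (h x) 0) as [E|E].
    + rewrite E, Rplus_0_l. apply IH; auto. intros y Hy; apply Hs; now right.
    + destruct (in_split x K (Hs x (or_introl eq_refl) E)) as [K1 [K2 ->]].
      rewrite Rsum_app, Rsum_cons.
      assert (Rsum l h <= Rsum (K1 ++ K2) h); [|rewrite Rsum_app in *; lra].
      apply IH; auto. intros y Hy Hy0.
      destruct (in_app_or _ _ _ (Hs y (or_intror Hy) Hy0)) as [?|[->|?]];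
        auto using in_or_app; contradiction.
Qed.

Lemma exists_NoDup_incl K : exists l, NoDup l /\ incl K l.
Proof.
  induction K as [|k K [l [Hl Hi]]].
  - exists nil. split; [constructor|intros x []].
  - destruct (excluded_middle_informative (In k l)) as [Hk|Hk].
    + exists l. split; [exact Hl|]. intros y [<-|Hy]; auto.
    + exists (k :: l). split; [now constructor|]. intros y [<-|Hy]; simpl; auto.
Qed.

End FiniteSums.

Lemma Rsum_swap {V W : Type} (l1 : list V) (l2 : list W) (F : V -> W -> R) :
  Rsum l1 (fun x => Rsum l2 (F x)) = Rsum l2 (fun y => Rsum l1 (fun x => F x y)).
Proof.
  induction l1 as [|x l1 IH].
  - symmetry; apply Rsum_eq0; reflexivity.
  - rewrite Rsum_cons, IH, <- Rsum_add. reflexivity.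
Qed.

Lemma Rabs_bilinear_le t p q r s : 0 < t ->
  Rabs (p * q + r * s) <= (t * (p * p + r * r) + (q * q + s * s) / t) / 2.
Proof.
  intros Ht. apply (Rmult_le_reg_l t); [exact Ht|].
  replace (t * ((t * (p * p + r * r) + (q * q + s * s) / t) / 2))
    with ((t * t * (p * p + r * r) + (q * q + s * s)) / 2) by (field; lra).
  rewrite <- (Rabs_pos_eq t) at 1 by lra. rewrite <- Rabs_mult.
  pose proof (pow2_ge_0 (t * p - q)). pose proof (pow2_ge_0 (t * r - s)).
  pose proof (pow2_ge_0 (t * p + q)). pose proof (pow2_ge_0 (t * r + s)).
  apply Rabs_le; split; nra.
Qed.

Lemma Cx_eq z w : re z = re w -> im z = im w -> z = w.
Proof. destruct z, w; simpl; intros -> ->; reflexivity. Qed.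

Lemma Cnorm2_nonneg z : 0 <= Cnorm2 z.
Proof. unfold Cnorm2. nra. Qed.

Lemma Cnorm2_Cmul z w : Cnorm2 (Cmul z w) = Cnorm2 z * Cnorm2 w.
Proof. unfold Cnorm2; simpl; ring. Qed.

Lemma Cnorm2_Cscale r z : Cnorm2 (Cscale r z) = r * r * Cnorm2 z.
Proof. unfold Cnorm2; simpl; ring. Qed.

Section ComplexSums.

Context {V : Type}.
Implicit Types (l : list V) (a b : V -> Cx).

Lemma re_Csum l (h : V -> Cx) : re (Csum l h) = Rsum l (fun x => re (h x)).
Proof. induction l; simpl; [reflexivity|]. rewrite IHl. reflexivity. Qed.

Lemma im_Csum l (h : V -> Cx) : im (Csum l h) = Rsum l (fun x => im (h x)).
Proof. induction l; simpl; [reflexivity|]. rewrite IHl. reflexivity. Qed.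

Lemma Csum_ext l (h h' : V -> Cx) : (forall x, h x = h' x) -> Csum l h = Csum l h'.
Proof. intros H; induction l; simpl; [reflexivity|]. rewrite H, IHl; reflexivity. Qed.

Lemma Csum_single l z (h : V -> Cx) : NoDup l -> In z l ->
  (forall x, In x l -> x <> z -> h x = C0) -> Csum l h = h z.
Proof.
  intros Hl Hz Hh. apply Cx_eq; rewrite ?re_Csum, ?im_Csum;
    apply (Rsum_single l z (fun x => _ (h x))); auto; intros x Hx Hxz; rewrite Hh; auto.
Qed.

Lemma Csum_eq0 l (h : V -> Cx) : (forall x, In x l -> h x = C0) -> Csum l h = C0.
Proof.
  intros Hh. apply Cx_eq; rewrite ?re_Csum, ?im_Csum;
    apply Rsum_eq0; intros x Hx; rewrite Hh; auto.
Qed.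

Definition Cdot l a b : Cx := Csum l (fun x => Cmul (Cconj (a x)) (b x)).

Lemma re_Cdot l a b :
  re (Cdot l a b) = Rsum l (fun x => re (a x) * re (b x) + im (a x) * im (b x)).
Proof. unfold Cdot. rewrite re_Csum. apply Rsum_ext_in. intros; simpl; ring. Qed.

Lemma im_Cdot l a b :
  im (Cdot l a b) = Rsum l (fun x => re (a x) * im (b x) - im (a x) * re (b x)).
Proof. unfold Cdot. rewrite im_Csum. apply Rsum_ext_in. intros; simpl; ring. Qed.

Lemma re_Cdot_sub l a b1 b2 :
  re (Cdot l a (fun x => Csub (b1 x) (b2 x))) = re (Cdot l a b1) - re (Cdot l a b2).
Proof. rewrite !re_Cdot, <- Rsum_sub. apply Rsum_ext_in. intros; simpl; ring. Qed.

Lemma im_Cdot_sub l a b1 b2 :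
  im (Cdot l a (fun x => Csub (b1 x) (b2 x))) = im (Cdot l a b1) - im (Cdot l a b2).
Proof. rewrite !im_Cdot, <- Rsum_sub. apply Rsum_ext_in. intros; simpl; ring. Qed.

Lemma sumsq_le_nonneg a M : sumsq_le a M -> 0 <= M.
Proof. intros H. exact (H nil (NoDup_nil _)). Qed.

(* Weighted AM-GM, [2 |conj a * d| <= t |a|^2 + |d|^2 / t], summed over [l] with
   [t = δ / (M + 1)]. *)
Lemma Cdot_small a M : sumsq_le a M -> forall δ, 0 < δ -> exists η, 0 < η /\
  forall d, sumsq_le d η -> forall l, NoDup l ->
    Rabs (re (Cdot l a d)) < δ /\ Rabs (im (Cdot l a d)) < δ.
Proof.
  intros Ha δ Hδ. pose proof (sumsq_le_nonneg _ _ Ha) as HM.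
  set (t := δ / (M + 1)). assert (Ht : 0 < t) by (unfold t; apply Rdiv_lt_0_compat; lra).
  exists (δ * t). split; [apply Rmult_lt_0_compat; lra|]. intros d Hd l Hl.
  assert (Hbound : forall g : V -> R,
    (forall x, Rabs (g x) <= (t * Cnorm2 (a x) + Cnorm2 (d x) / t) / 2) ->
    Rabs (Rsum l g) < δ).
  { intros g Hg. eapply Rle_lt_trans; [apply Rabs_Rsum_le|].
    eapply Rle_lt_trans; [apply Rsum_le; intros x _; apply Hg|].
    rewrite (Rsum_ext_in l _ (fun x => t / 2 * Cnorm2 (a x) + / (2 * t) * Cnorm2 (d x)))
      by (intros; field; lra).
    rewrite Rsum_add, !Rsum_scal.
    specialize (Ha l Hl). specialize (Hd l Hl).
    assert (t * M < δ).
    { unfold t. apply (Rmult_lt_reg_r (M + 1)); [lra|].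
      replace (δ / (M + 1) * M * (M + 1)) with (δ * M) by (field; lra). nra. }
    assert (/ (2 * t) * Rsum l (fun x => Cnorm2 (d x)) <= δ / 2).
    { replace (δ / 2) with (/ (2 * t) * (δ * t)) by (field; lra).
      apply Rmult_le_compat_l; [|exact Hd]. apply Rlt_le, Rinv_0_lt_compat; lra. }
    nra. }
  split; [rewrite re_Cdot|rewrite im_Cdot]; apply Hbound; intros x; unfold Cnorm2.
  - apply Rabs_bilinear_le, Ht.
  - replace (re (a x) * im (d x) - im (a x) * re (d x))
      with (re (a x) * im (d x) + (- im (a x)) * re (d x)) by ring.
    replace (re (a x) * re (a x) + im (a x) * im (a x))
      with (re (a x) * re (a x) + (- im (a x)) * (- im (a x))) by ring.
    replace (re (d x) * re (d x) + im (d x) * im (d x))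
      with (im (d x) * im (d x) + re (d x) * re (d x)) by ring.
    apply Rabs_bilinear_le, Ht.
Qed.

Lemma inner_is_parts a b c δ : inner_is a b c -> 0 < δ -> exists l0, forall l, NoDup l ->
  incl l0 l -> Rabs (re (Cdot l a b) - re c) < δ /\ Rabs (im (Cdot l a b) - im c) < δ.
Proof.
  intros H Hδ. destruct (H (δ * δ)) as [l0 Hl0]; [nra|].
  exists l0. intros l Hl Hi. specialize (Hl0 l Hl Hi). unfold Cnorm2 in Hl0; simpl in Hl0.
  fold (Cdot l a b) in Hl0.
  pose proof (Rle_0_sqr (re (Cdot l a b) - re c)). pose proof (Rle_0_sqr (im (Cdot l a b) - im c)).
  unfold Rsqr in *. split; apply Rabs_def1; nra.
Qed.

Lemma inner_is_unique a b c1 c2 : inner_is a b c1 -> inner_is a b c2 -> c1 = c2.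
Proof.
  intros H1 H2.
  assert (Hclose : forall δ, 0 < δ ->
    Rabs (re c1 - re c2) < 2 * δ /\ Rabs (im c1 - im c2) < 2 * δ).
  { intros δ Hδ.
    destruct (inner_is_parts a b c1 δ H1 Hδ) as [l1 Hl1].
    destruct (inner_is_parts a b c2 δ H2 Hδ) as [l2 Hl2].
    destruct (exists_NoDup_incl (l1 ++ l2)) as [l [Hl Hi]].
    destruct (Hl1 l Hl) as [A1 B1]; [intros y Hy; apply Hi, in_or_app; auto|].
    destruct (Hl2 l Hl) as [A2 B2]; [intros y Hy; apply Hi, in_or_app; auto|].
    apply Rabs_def2 in A1, A2, B1, B2. split; apply Rabs_def1; lra. }
  assert (Heq : forall x y, (forall δ, 0 < δ -> Rabs (x - y) < 2 * δ) -> x = y).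
  { intros x y Hxy. apply Rle_antisym; apply Rle_plus_epsilon; intros eps Heps;
      destruct (Rabs_def2 _ _ (Hxy (eps / 2) ltac:(lra))); lra. }
  apply Cx_eq; apply Heq; intros δ Hδ; apply (Hclose δ Hδ).
Qed.

Lemma inner_is_stable a b c : (exists l0, forall l, NoDup l -> incl l0 l ->
  re (Cdot l a b) = re c /\ im (Cdot l a b) = im c) -> inner_is a b c.
Proof.
  intros [l0 H] eps Heps. exists l0. intros l Hl Hi. destruct (H l Hl Hi) as [H1 H2].
  unfold Cnorm2. simpl. fold (Cdot l a b). rewrite H1, H2. lra.
Qed.

Lemma inner_is_single a b z : (forall x, x <> z -> Cmul (Cconj (a x)) (b x) = C0) ->
  inner_is a b (Cmul (Cconj (a z)) (b z)).
Proof.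
  intros H. apply inner_is_stable. exists (z :: nil). intros l Hl Hi.
  unfold Cdot. rewrite (Csum_single l z); [auto|auto|apply Hi; now left|auto].
Qed.

Lemma inner_is_ext a b b' c : (forall x, b x = b' x) -> inner_is a b c -> inner_is a b' c.
Proof.
  intros H Hi eps Heps. destruct (Hi eps Heps) as [l0 Hl0]. exists l0. intros l Hl Hil.
  rewrite <- (Csum_ext l (fun x => Cmul (Cconj (a x)) (b x))) by (intros; rewrite H; auto).
  apply Hl0; auto.
Qed.

Lemma inner_is_cauchy a (F : nat -> V -> Cx) f (c : nat -> Cx) : in_l2 a ->
  (forall n, inner_is a (F n) (c n)) -> l2_conv F f ->
  Cauchy_crit (fun n => re (c n)) /\ Cauchy_crit (fun n => im (c n)).
Proof.
  intros [M Ha] Hc Hconv.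
  assert (H : forall ε, 0 < ε -> exists N, forall n m, (N <= n)%nat -> (N <= m)%nat ->
    Rabs (re (c n) - re (c m)) < ε /\ Rabs (im (c n) - im (c m)) < ε).
  { intros ε Hε.
    destruct (Cdot_small a M Ha (ε / 4)) as [η [Hη Hd]]; [lra|].
    destruct (Hconv η Hη) as [N HN]. exists N. intros n m Hn Hm.
    destruct (inner_is_parts a (F n) (c n) (ε / 4) (Hc n)) as [ln Hln]; [lra|].
    destruct (inner_is_parts a (F m) (c m) (ε / 4) (Hc m)) as [lm Hlm]; [lra|].
    destruct (exists_NoDup_incl (ln ++ lm)) as [l [Hl Hi]].
    destruct (Hln l Hl) as [A1 B1]; [intros y Hy; apply Hi, in_or_app; auto|].
    destruct (Hlm l Hl) as [A2 B2]; [intros y Hy; apply Hi, in_or_app; auto|].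
    destruct (Hd _ (HN n Hn) l Hl) as [A3 B3]. destruct (Hd _ (HN m Hm) l Hl) as [A4 B4].
    rewrite re_Cdot_sub in A3, A4. rewrite im_Cdot_sub in B3, B4.
    apply Rabs_def2 in A1, A2, B1, B2. apply Rabs_def2 in A3, A4, B3, B4.
    split; apply Rabs_def1; lra. }
  split; intros ε Hε; destruct (H ε Hε) as [N HN]; exists N; intros n m Hn Hm;
    unfold R_dist; apply (HN n m); lia.
Qed.

Lemma inner_is_limit a (F : nat -> V -> Cx) f (c : nat -> Cx) cr ci : in_l2 a ->
  (forall n, inner_is a (F n) (c n)) -> l2_conv F f ->
  Un_cv (fun n => re (c n)) cr -> Un_cv (fun n => im (c n)) ci -> inner_is a f (mkC cr ci).
Proof.
  intros [M Ha] Hc Hconv Hr Hi eps Heps.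
  set (δ := Rmin 1 (eps / 4)).
  assert (Hδ : 0 < δ) by (unfold δ; apply Rmin_pos; lra).
  assert (Hδ1 : δ <= 1) by apply Rmin_l. assert (Hδ2 : δ <= eps / 4) by apply Rmin_r.
  destruct (Cdot_small a M Ha (δ / 3)) as [η [Hη Hd]]; [lra|].
  destruct (Hconv η Hη) as [N1 HN1].
  destruct (Hr (δ / 3)) as [N2 HN2]; [lra|]. destruct (Hi (δ / 3)) as [N3 HN3]; [lra|].
  set (n := (N1 + N2 + N3)%nat).
  destruct (inner_is_parts a (F n) (c n) (δ / 3) (Hc n)) as [l0 Hl0]; [lra|].
  exists l0. intros l Hl Hil. fold (Cdot l a f).
  destruct (Hl0 l Hl Hil) as [A1 B1].
  destruct (Hd _ (HN1 n ltac:(unfold n; lia)) l Hl) as [A2 B2].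
  specialize (HN2 n ltac:(unfold n; lia)). specialize (HN3 n ltac:(unfold n; lia)).
  unfold R_dist in HN2, HN3. rewrite re_Cdot_sub in A2. rewrite im_Cdot_sub in B2.
  apply Rabs_def2 in A1, B1, HN2, HN3. apply Rabs_def2 in A2, B2.
  unfold Cnorm2; simpl.
  assert (Hre : Rabs (re (Cdot l a f) - cr) < δ) by (apply Rabs_def1; lra).
  assert (Him : Rabs (im (Cdot l a f) - ci) < δ) by (apply Rabs_def1; lra).
  apply Rabs_def2 in Hre, Him. nra.
Qed.

End ComplexSums.

Section JacobiSymmetry.

Context {V : Type}.
Variables (par : V -> V) (ch : V -> list V) (lam beta : V -> R).
Hypothesis Hch : forall x y, par y = x <-> In y (ch x).
Hypothesis Hnd : forall x, NoDup (ch x).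

Definition Jreal (p : V -> R) (x : V) : R :=
  lam x * p (par x) + beta x * p x + Rsum (ch x) (fun y => lam y * p y).

Lemma re_Japply (v : V -> Cx) x :
  re (Japply par ch lam beta v x) = Jreal (fun y => re (v y)) x.
Proof. unfold Japply, Jreal. simpl. rewrite re_Csum. reflexivity. Qed.

Lemma im_Japply (v : V -> Cx) x :
  im (Japply par ch lam beta v x) = Jreal (fun y => im (v y)) x.
Proof. unfold Japply, Jreal. simpl. rewrite im_Csum. reflexivity. Qed.

Lemma Jreal_ext p q x : (forall y, p y = q y) -> Jreal p x = Jreal q x.
Proof. intros H. unfold Jreal. rewrite !H. f_equal. apply Rsum_ext_in. intros; rewrite H; auto. Qed.

Lemma Jreal_lincomb (K : list V) (c : V -> R) (g : V -> V -> R) x :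
  Jreal (fun y => Rsum K (fun z => c z * g z y)) x = Rsum K (fun z => c z * Jreal (g z) x).
Proof.
  unfold Jreal.
  rewrite (Rsum_ext_in K
    (fun z => c z * (lam x * g z (par x) + beta x * g z x + Rsum (ch x) (fun y => lam y * g z y)))
    (fun z => lam x * (c z * g z (par x)) + beta x * (c z * g z x)
       + Rsum (ch x) (fun y => lam y * (c z * g z y)))).
  2:{ intros z _.
      rewrite (Rsum_ext_in (ch x) (fun y => lam y * (c z * g z y))
                 (fun y => c z * (lam y * g z y))), Rsum_scal by (intros; ring).
      ring. }
  rewrite !Rsum_add, Rsum_swap, !Rsum_scal. f_equal.
  apply Rsum_ext_in. intros y _. rewrite Rsum_scal. reflexivity.
Qed.

Definition delta (z y : V) : R := if excluded_middle_informative (y = z) then 1 else 0.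

Lemma delta_same z : delta z z = 1.
Proof. unfold delta. destruct (excluded_middle_informative (z = z)); [reflexivity|contradiction]. Qed.

Lemma delta_other z y : y <> z -> delta z y = 0.
Proof. unfold delta. destruct (excluded_middle_informative (y = z)); [contradiction|reflexivity]. Qed.

Lemma fsupp_delta_expand (K : list V) (q : V -> R) : NoDup K ->
  (forall x, ~ In x K -> q x = 0) -> forall y, q y = Rsum K (fun z => q z * delta z y).
Proof.
  intros HK Hq y. destruct (excluded_middle_informative (In y K)) as [Hy|Hy].
  - rewrite (Rsum_single K y); auto; [rewrite delta_same; ring|].
    intros x _ Hx. rewrite delta_other; [ring|]. intros ->; contradiction.
  - rewrite Hq by auto. symmetry; apply Rsum_eq0. intros x Hx.
    rewrite delta_other; [ring|]. intros ->; contradiction.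
Qed.

Definition nbhd (z : V) : list V := ch z ++ z :: par z :: nil.

Lemma Rsum_Jreal_delta z p l : NoDup l -> incl (nbhd z) l ->
  Rsum l (fun x => Jreal (delta z) x * p x) = Jreal p z.
Proof.
  intros Hl Hi.
  assert (Hchildren : forall x, Rsum (ch x) (fun y => lam y * delta z y) =
    if excluded_middle_informative (x = par z) then lam z else 0).
  { intros x. destruct (excluded_middle_informative (x = par z)) as [->|E].
    - rewrite (Rsum_single _ z); [rewrite delta_same; ring|auto|apply Hch; auto|].
      intros y _ Hy; rewrite delta_other; auto; ring.
    - apply Rsum_eq0. intros y Hy. rewrite delta_other; [ring|].
      intros ->. apply E. symmetry; apply Hch; auto. }
  unfold Jreal at 1.
  rewrite (Rsum_ext_in l _ (fun x => lam x * delta z (par x) * p x + beta x * delta z x * p x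
     + (if excluded_middle_informative (x = par z) then lam z else 0) * p x))
    by (intros x _; rewrite Hchildren; ring).
  rewrite !Rsum_add.
  rewrite (Rsum_NoDup_support l (ch z)); auto.
  2:{ intros x Hx. destruct (excluded_middle_informative (par x = z)) as [Hpx|Hpx];
        [|exfalso; apply Hx; rewrite delta_other; auto; ring].
      split; intros _; [apply Hch; auto|apply Hi, in_or_app; left; apply Hch; auto]. }
  rewrite (Rsum_single l z (fun x => beta x * delta z x * p x));
    [|auto|apply Hi, in_or_app; right; now left|intros x _ Hx; rewrite delta_other; auto; ring].
  rewrite (Rsum_single l (par z));
    [|auto|apply Hi, in_or_app; right; right; now left
     |intros x _ Hx; destruct (excluded_middle_informative (x = par z)); [contradiction|ring]].
  unfold Jreal. rewrite delta_same.
  destruct (excluded_middle_informative (par z = par z)) as [_|]; [|contradiction].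
  rewrite (Rsum_ext_in (ch z) _ (fun y => lam y * p y)); [ring|].
  intros y Hy. rewrite (proj2 (Hch z y) Hy), delta_same. ring.
Qed.

Lemma Jreal_symmetric (K l : list V) (p q : V -> R) : NoDup K -> NoDup l ->
  (forall x, ~ In x K -> q x = 0) -> incl (flat_map nbhd K) l ->
  Rsum l (fun x => Jreal q x * p x) = Rsum K (fun z => q z * Jreal p z).
Proof.
  intros HK Hl Hq Hi.
  rewrite (Rsum_ext_in l _ (fun x => Rsum K (fun z => q z * (Jreal (delta z) x * p x)))).
  2:{ intros x _. rewrite (Jreal_ext _ _ x (fsupp_delta_expand K q HK Hq)), Jreal_lincomb.
      rewrite Rmult_comm, <- Rsum_scal. apply Rsum_ext_in. intros; ring. }
  rewrite Rsum_swap. apply Rsum_ext_in. intros z Hz.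
  rewrite Rsum_scal, Rsum_Jreal_delta; auto.
  intros y Hy. apply Hi, in_flat_map. exists z; auto.
Qed.

Lemma Japply_green (a f : V -> Cx) (K : list V) : NoDup K ->
  (forall x, ~ In x K -> f x = C0) ->
  inner_is (Japply par ch lam beta a) f (Cdot K (Japply par ch lam beta a) f) /\
  inner_is a (Japply par ch lam beta f) (Cdot K (Japply par ch lam beta a) f).
Proof.
  intros HK Hf.
  assert (Hre : forall x, ~ In x K -> re (f x) = 0) by (intros x Hx; rewrite Hf; auto).
  assert (Him : forall x, ~ In x K -> im (f x) = 0) by (intros x Hx; rewrite Hf; auto).
  split; apply inner_is_stable.
  - exists K. intros l Hl Hi. rewrite !re_Cdot, !im_Cdot.
    split; apply Rsum_NoDup_support; auto; intros x Hx;
      (destruct (excluded_middle_informative (In x K)) as [Hk|Hk];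
       [split; intros _; [exact Hk|apply Hi, Hk]
       |exfalso; apply Hx; rewrite Hre, Him by exact Hk; ring]).
  - exists (flat_map nbhd K). intros l Hl Hi. rewrite !re_Cdot, !im_Cdot. split.
    + rewrite (Rsum_ext_in l _ (fun x => Jreal (fun y => re (f y)) x * re (a x)
                                       + Jreal (fun y => im (f y)) x * im (a x)))
        by (intros; rewrite re_Japply, im_Japply; ring).
      rewrite Rsum_add, !(Jreal_symmetric K l), <- Rsum_add by auto.
      apply Rsum_ext_in. intros; rewrite re_Japply, im_Japply; ring.
    + rewrite (Rsum_ext_in l _ (fun x => Jreal (fun y => im (f y)) x * re (a x)
                                       - Jreal (fun y => re (f y)) x * im (a x)))
        by (intros; rewrite re_Japply, im_Japply; ring).
      rewrite Rsum_sub, !(Jreal_symmetric K l), <- Rsum_sub by auto.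
      apply Rsum_ext_in. intros; rewrite re_Japply, im_Japply; ring.
Qed.

(* Pass to the limit in Green's formula along a sequence approximating a point of the
   closure. *)
Lemma adjoint_closure_Jmin (a : V -> Cx) :
  in_l2 a -> in_l2 (Japply par ch lam beta a) ->
  adjoint (closure (Jmin par ch lam beta)) a (Japply par ch lam beta a).
Proof.
  intros Ha HJa. split; [exact Ha|split; [exact HJa|]].
  intros f g [_ [_ [F [G [HFG [HF HG]]]]]].
  set (Ja := Japply par ch lam beta a).
  destruct (choice (fun n c => inner_is Ja (F n) c /\ inner_is a (G n) c)) as [c Hc].
  { intros n. destruct (HFG n) as [[K0 HK0] HGn].
    destruct (exists_NoDup_incl K0) as [K [HK HiK]].
    destruct (Japply_green a (F n) K HK) as [H1 H2].
    { intros x Hx. apply HK0. intros Hx0. apply Hx, HiK, Hx0. }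
    exists (Cdot K Ja (F n)). split; [exact H1|].
    apply (inner_is_ext _ _ _ _ (fun x => eq_sym (HGn x))), H2. }
  destruct (inner_is_cauchy Ja F f c HJa (fun n => proj1 (Hc n)) HF) as [Cr Ci].
  destruct (R_complete _ Cr) as [cr Hcr]. destruct (R_complete _ Ci) as [ci Hci].
  exists (mkC cr ci). split.
  - apply (inner_is_limit Ja F f c); auto. intros n; apply Hc.
  - apply (inner_is_limit a G g c); auto. intros n; apply Hc.
Qed.

End JacobiSymmetry.

Lemma Rsum_le_geometric_blocks {V : Type} (B : nat -> list V) (h : V -> R) q :
  0 <= q < 1 -> (forall x, 0 <= h x) -> (forall n, Rsum (B n) h <= q ^ n) ->
  (forall x, h x <> 0 -> exists n, In x (B n)) ->
  forall l, NoDup l -> Rsum l h <= / (1 - q).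
Proof.
  intros Hq Hh HB Hcover l Hl.
  assert (Htail : forall N k, Rsum (flat_map B (seq k N)) h <= q ^ k / (1 - q)).
  { induction N as [|N IH]; intros k; simpl.
    - unfold Rdiv. apply Rmult_le_pos; [apply pow_le; lra|apply Rlt_le, Rinv_0_lt_compat; lra].
    - rewrite Rsum_app. specialize (IH (S k)). specialize (HB k). simpl in IH.
      replace (q ^ k / (1 - q)) with (q ^ k + q * q ^ k / (1 - q)) by (field; lra). lra. }
  assert (HN : exists N, forall x, In x l -> h x <> 0 -> In x (flat_map B (seq 0 N))).
  { clear Hl. induction l as [|x l [N HN]].
    - exists 0%nat. intros x [].
    - destruct (Req_dec (h x) 0) as [E|E].
      + exists N. intros y [<-|Hy] Hy0; [contradiction|auto].
      + destruct (Hcover x E) as [n Hn]. exists (max N (S n)). intros y Hy Hy0.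
        apply in_flat_map. destruct Hy as [<-|Hy].
        * exists n. split; [apply in_seq; lia|exact Hn].
        * destruct (proj1 (in_flat_map _ _ _) (HN y Hy Hy0)) as [k [Hk1 Hk2]].
          apply in_seq in Hk1. exists k. split; [apply in_seq; lia|exact Hk2]. }
  destruct HN as [N HN].
  eapply Rle_trans; [apply (Rsum_le_incl l (flat_map B (seq 0 N))); auto|].
  specialize (Htail N 0%nat). simpl in Htail. lra.
Qed.

Fixpoint Cpow (z : Cx) (n : nat) : Cx :=
  match n with O => mkC 1 0 | S n => Cmul z (Cpow z n) end.

Lemma Cnorm2_Cpow z n : Cnorm2 (Cpow z n) = Cnorm2 z ^ n.
Proof. induction n; simpl; [unfold Cnorm2; simpl; ring|]. rewrite Cnorm2_Cmul, IHn. ring. Qed.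

Definition half_i : Cx := mkC 0 (/ 2).

Lemma Cpow_half_i_SS n : Cpow half_i (S (S n)) = Cscale (- / 4) (Cpow half_i n).
Proof. apply Cx_eq; simpl; field. Qed.

Lemma exists_level_zero (V : Type) (lvl : V -> nat) (par : V -> V) (ch : V -> list V) :
  (forall x, lvl (par x) = S (lvl x)) -> (forall x y, par y = x <-> In y (ch x)) ->
  (forall x, (1 <= lvl x)%nat -> ch x <> nil) -> V -> exists x0, lvl x0 = 0%nat.
Proof.
  intros Hlvl Hch Hne v. remember (lvl v) as n eqn:Hn. revert v Hn.
  induction n as [|n IH]; intros x Hx; [exists x; auto|].
  destruct (ch x) as [|y l] eqn:E; [exfalso; apply (Hne x); [lia|exact E]|].
  apply (IH y). assert (Hy : par y = x) by (apply Hch; rewrite E; now left).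
  rewrite <- Hy, Hlvl in Hx. lia.
Qed.

Section Counterexample.

Context {V : Type}.
Variables (lvl : V -> nat) (par : V -> V) (ch : V -> list V) (x0 : V).
Hypothesis Hlvl : forall x, lvl (par x) = S (lvl x).
Hypothesis Hch : forall x y, par y = x <-> In y (ch x).
Hypothesis Hnd : forall x, NoDup (ch x).
Hypothesis Hx0 : lvl x0 = 0%nat.

Definition ray (n : nat) : V := Nat.iter n par x0.

Definition on_ray (x : V) : Prop := x = ray (lvl x).

Lemma par_ray n : par (ray n) = ray (S n).
Proof. reflexivity. Qed.

Lemma lvl_ray n : lvl (ray n) = n.
Proof. induction n as [|n IH]; [exact Hx0|]. rewrite <- par_ray, Hlvl, IH. reflexivity. Qed.

Lemma on_ray_ray n : on_ray (ray n).
Proof. unfold on_ray. rewrite lvl_ray. reflexivity. Qed.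

Lemma on_ray_par y : on_ray y -> on_ray (par y).
Proof. unfold on_ray. intros Hy. rewrite Hy at 1. rewrite par_ray, Hlvl. reflexivity. Qed.

Lemma on_ray_child m y : In y (ch (ray (S m))) -> on_ray y -> y = ray m.
Proof.
  intros Hy Ho. apply Hch in Hy. rewrite Ho.
  assert (Hl : lvl (par y) = S m) by (rewrite Hy; apply lvl_ray).
  rewrite Hlvl in Hl. injection Hl as ->. reflexivity.
Qed.

Lemma ch_ray0 : ch (ray 0) = nil.
Proof.
  destruct (ch (ray 0)) as [|y l] eqn:E; [reflexivity|].
  assert (Hy : par y = ray 0) by (apply Hch; rewrite E; now left).
  pose proof (f_equal lvl Hy) as Hl. rewrite Hlvl, lvl_ray in Hl. discriminate.
Qed.

Lemma length_ch_par_pos x : (0 < length (ch (par x)))%nat.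
Proof.
  assert (Hx : In x (ch (par x))) by (apply Hch; reflexivity).
  destruct (ch (par x)); simpl in *; [contradiction|lia].
Qed.

(* On the ray, [J u = 0] away from [x0] reads [4^n (i/2)^(n+1) + 4^(n-1) (i/2)^(n-1) = 0];
   off the ray, [lam] is small enough for [J u] to stay square summable. *)
Definition lam_ray (x : V) : R :=
  if excluded_middle_informative (on_ray x) then 4 ^ lvl x else / INR (length (ch (par x))).

Definition u_ray (x : V) : Cx :=
  if excluded_middle_informative (on_ray x) then Cpow half_i (lvl x) else C0.

Definition Ju_ray : V -> Cx := Japply par ch lam_ray (fun _ => 0) u_ray.

Lemma lam_ray_pos x : 0 < lam_ray x.
Proof.
  unfold lam_ray. destruct (excluded_middle_informative (on_ray x)).
  - apply pow_lt; lra.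
  - apply Rinv_0_lt_compat, lt_0_INR, length_ch_par_pos.
Qed.

Lemma lam_ray_on n : lam_ray (ray n) = 4 ^ n.
Proof.
  unfold lam_ray. destruct (excluded_middle_informative (on_ray (ray n))) as [_|H].
  - rewrite lvl_ray. reflexivity.
  - exfalso. apply H, on_ray_ray.
Qed.

Lemma lam_ray_off x : ~ on_ray x -> lam_ray x = / INR (length (ch (par x))).
Proof. intros H. unfold lam_ray. destruct (excluded_middle_informative (on_ray x)); tauto. Qed.

Lemma u_ray_on n : u_ray (ray n) = Cpow half_i n.
Proof.
  unfold u_ray. destruct (excluded_middle_informative (on_ray (ray n))) as [_|H].
  - rewrite lvl_ray. reflexivity.
  - exfalso. apply H, on_ray_ray.
Qed.

Lemma u_ray_off x : ~ on_ray x -> u_ray x = C0.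
Proof. intros H. unfold u_ray. destruct (excluded_middle_informative (on_ray x)); tauto. Qed.

Lemma Ju_ray_x0 : Ju_ray (ray 0) = half_i.
Proof.
  unfold Ju_ray, Japply. rewrite ch_ray0, par_ray, lam_ray_on, !u_ray_on.
  apply Cx_eq; simpl; field.
Qed.

Lemma Ju_ray_on n : Ju_ray (ray (S n)) = C0.
Proof.
  unfold Ju_ray, Japply.
  rewrite (Csum_single _ (ray n)); [| |apply Hch; reflexivity|].
  - rewrite par_ray, !lam_ray_on, !u_ray_on, Cpow_half_i_SS.
    apply Cx_eq; simpl; field.
  - apply Hnd.
  - intros y Hy Hyn. destruct (excluded_middle_informative (on_ray y)) as [Ho|Ho].
    + exfalso. apply Hyn, (on_ray_child n); auto.
    + rewrite u_ray_off by exact Ho. apply Cx_eq; simpl; ring.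
Qed.

Lemma Ju_ray_off x : ~ on_ray x -> Ju_ray x = Cscale (lam_ray x) (u_ray (par x)).
Proof.
  intros Hx. unfold Ju_ray, Japply. rewrite Csum_eq0, (u_ray_off x Hx).
  - apply Cx_eq; simpl; ring.
  - intros y Hy. rewrite u_ray_off; [apply Cx_eq; simpl; ring|].
    intros Ho. apply Hx. rewrite <- (proj2 (Hch x y) Hy). apply on_ray_par, Ho.
Qed.

Lemma u_ray_in_l2 : in_l2 u_ray.
Proof.
  exists (/ (1 - / 4)). intros l Hl.
  apply (Rsum_le_geometric_blocks (fun n => ray n :: nil)); auto; try lra.
  - intros x; apply Cnorm2_nonneg.
  - intros n. rewrite Rsum_cons, u_ray_on, Cnorm2_Cpow.
    replace (Cnorm2 half_i) with (/ 4) by (unfold Cnorm2; simpl; field). simpl; lra.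
  - intros x Hx. destruct (excluded_middle_informative (on_ray x)) as [Ho|Ho].
    + exists (lvl x). now left.
    + rewrite u_ray_off in Hx by exact Ho. exfalso. apply Hx. unfold Cnorm2; simpl; ring.
Qed.

Lemma Cnorm2_Ju_ray_le x :
  Cnorm2 (Ju_ray x) <= Cnorm2 (u_ray x) + Cnorm2 (u_ray (par x)) / INR (length (ch (par x))).
Proof.
  set (k := INR (length (ch (par x)))).
  assert (Hk : 1 <= k) by (apply (le_INR 1), length_ch_par_pos).
  assert (Hpar : 0 <= Cnorm2 (u_ray (par x)) / k)
    by (apply Rmult_le_pos; [apply Cnorm2_nonneg|apply Rlt_le, Rinv_0_lt_compat; lra]).
  destruct (excluded_middle_informative (on_ray x)) as [Ho|Ho].
  - unfold on_ray in Ho. rewrite Ho in Hpar |- *. destruct (lvl x) as [|m].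
    + rewrite Ju_ray_x0, u_ray_on. unfold Cnorm2 at 1 2; simpl in Hpar |- *. lra.
    + rewrite Ju_ray_on. pose proof (Cnorm2_nonneg (u_ray (ray (S m)))).
      replace (Cnorm2 C0) with 0 by (unfold Cnorm2; simpl; ring). lra.
  - rewrite Ju_ray_off, lam_ray_off, Cnorm2_Cscale by exact Ho. fold k.
    pose proof (Cnorm2_nonneg (u_ray x)).
    assert (/ k * / k * Cnorm2 (u_ray (par x)) <= Cnorm2 (u_ray (par x)) / k); [|lra].
    assert (Hinv : / k <= 1) by (rewrite <- Rinv_1; apply Rinv_le_contravar; lra).
    replace (/ k * / k * Cnorm2 (u_ray (par x))) with (/ k * (Cnorm2 (u_ray (par x)) / k))
      by (unfold Rdiv; ring).
    pose proof (Rmult_le_compat_r _ _ _ Hpar Hinv). lra.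
Qed.

Lemma Ju_ray_in_l2 : in_l2 Ju_ray.
Proof.
  set (q := / 4). set (h := fun x => Cnorm2 (u_ray (par x)) / INR (length (ch (par x)))).
  assert (Hh : forall l, NoDup l -> Rsum l h <= / (1 - q)).
  { apply (Rsum_le_geometric_blocks (fun n => ch (ray n))); try (unfold q; lra).
    - intros x. apply Rmult_le_pos; [apply Cnorm2_nonneg|].
      apply Rlt_le, Rinv_0_lt_compat, lt_0_INR, length_ch_par_pos.
    - intros n. rewrite (Rsum_ext_in _ _ (fun _ => q ^ n / INR (length (ch (ray n))))).
      + rewrite Rsum_const. destruct (length (ch (ray n))) as [|k].
        * simpl. rewrite Rmult_0_l. apply pow_le. unfold q; lra.
        * apply Req_le. field. apply not_0_INR. lia.
      + intros y Hy. unfold h. rewrite (proj2 (Hch _ y) Hy), u_ray_on, Cnorm2_Cpow.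
        unfold q. f_equal. f_equal. unfold Cnorm2; simpl; field.
    - intros x Hx. exists (lvl (par x)). apply Hch.
      destruct (excluded_middle_informative (on_ray (par x))) as [Ho|Ho]; [exact Ho|].
      exfalso. apply Hx. unfold h. rewrite u_ray_off by exact Ho.
      unfold Cnorm2; simpl; unfold Rdiv; ring. }
  destruct u_ray_in_l2 as [M HM]. exists (M + / (1 - q)). intros l Hl.
  eapply Rle_trans; [apply Rsum_le; intros x _; apply Cnorm2_Ju_ray_le|].
  rewrite Rsum_add. specialize (HM l Hl). specialize (Hh l Hl). unfold h in Hh. lra.
Qed.

Lemma u_ray_Ju_ray_disjoint x : x <> ray 0 -> u_ray x = C0 \/ Ju_ray x = C0.
Proof.
  intros Hx. destruct (excluded_middle_informative (on_ray x)) as [Ho|Ho].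
  - right. unfold on_ray in Ho. destruct (lvl x) as [|m]; [contradiction|].
    rewrite Ho. apply Ju_ray_on.
  - left. apply u_ray_off, Ho.
Qed.

End Counterexample.

Theorem theorem3 (V : Type) (lvl : V -> nat) (par : V -> V) (ch : V -> list V)
  (HT : is_level_tree V lvl par ch) :
  exists (lam beta : V -> R),
    (forall x, 0 < lam x) /\ ~ ess_selfadjoint (Jmin par ch lam beta).
Proof.
  destruct HT as [[v] [Hlvl [Hch [Hnd [Hne _]]]]].
  destruct (exists_level_zero V lvl par ch Hlvl Hch Hne v) as [x0 Hx0].
  exists (lam_ray lvl par ch x0), (fun _ => 0).
  split; [intros x; apply lam_ray_pos; auto|]. intros Hsa.
  set (u := u_ray lvl par x0). set (Ju := Ju_ray lvl par ch x0).
  assert (Hadj : adjoint (closure (Jmin par ch (lam_ray lvl par ch x0) (fun _ => 0))) u Ju)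
    by (apply adjoint_closure_Jmin; [exact Hch|exact Hnd|apply u_ray_in_l2|apply Ju_ray_in_l2]; auto).
  destruct (proj2 (proj2 Hadj) u Ju (proj2 (Hsa u Ju) Hadj)) as [c [HJu_u Hu_Ju]].
  assert (Hzero : forall x, x <> ray par x0 0 ->
    Cmul (Cconj (u x)) (Ju x) = C0 /\ Cmul (Cconj (Ju x)) (u x) = C0).
  { intros x Hx. destruct (u_ray_Ju_ray_disjoint lvl par ch x0 Hlvl Hch Hnd Hx0 x Hx) as [E|E];
      unfold u, Ju; rewrite E; split; apply Cx_eq; simpl; ring. }
  pose proof (inner_is_unique _ _ _ _ Hu_Ju
    (inner_is_single u Ju _ (fun x Hx => proj1 (Hzero x Hx)))) as E1.
  pose proof (inner_is_unique _ _ _ _ HJu_u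
    (inner_is_single Ju u _ (fun x Hx => proj2 (Hzero x Hx)))) as E2.
  unfold u, Ju in E1, E2. rewrite u_ray_on, Ju_ray_x0 in E1, E2 by auto.
  apply (f_equal im) in E1, E2. simpl in E1, E2. lra.
Qed.
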